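(* Fix any $\alpha>1$. Consider Algorithm MWHVC (described in the context) run on a hypergraph $G=(V,E)$ of rank $f$ and maximum degree $\Delta$ with nonnegative vertex weights $w$, with parameters $\varepsilon\in(0,1]$, $\beta=\varepsilon/(f+\varepsilon)$ and multiplier $\alpha$. The number of iterations of the algorithm is $O\left(\log_\alpha\Delta + f\cdot\frac{\alpha}{\beta}\right)$.
   Context: Let $G=(V,E)$ be a hypergraph: each hyperedge is a nonempty subset of $V$ of size at most $f$ (rank $f$). Vertices have nonnegative weights $w(v)$. For $v\in V$, $E(v)=\{e\in E: v\in e\}$; $\Delta=\max_v |E(v)|\ge 3$. A hyperedge $e$ is covered by $C\subseteq V$ if $e\cap C\neq\emptyset$. The computation is distributed in synchronous rounds on the bipartite network with node set $V\cup E$ and a link between $v$ and $e$ iff $v\in e$. Parameters: $\varepsilon\in(0,1]$, $\beta=\varepsilon/(f+\varepsilon)$, and a multiplier $\alpha>1$. Algorithm MWHVC: Initialize $C\gets\emptyset$ and $E'(v)\gets E(v)$ for every $v$. Iteration $0$: every hyperedge $e$ sets $\mathrm{deal}_0(e)=\beta\cdot\min_{v\in e} w(v)/|E(v)|$ and $\delta_0(e)=\mathrm{deal}_0(e)$. For $i=1,2,\dots$: (a) every vertex $v\notin C$ (not terminated) checks whether $\sum_{e\in E(v)}\delta_{i-1}(e)\ge(1-\beta)w(v)$; if so, $v$ joins $C$, tells every $e\in E'(v)$ that $e$ is covered, and terminates. (b) Every uncovered hyperedge that receives such a message becomes covered, informs all its vertices, and terminates. (c) Every vertex $v\notin C$ that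 is told $e$ is covered sets $E'(v)\gets E'(v)\setminus\{e\}$; if $E'(v)=\emptyset$, $v$ terminates without joining $C$. (d) Every vertex $v\notin C$ sends ''raise'' to all $e\in E'(v)$ if $\sum_{e\in E'(v)}\mathrm{deal}_{i-1}(e)\le(\beta/\alpha)w(v)$, and otherwise sends ''stuck'' to all $e\in E'(v)$. (e) Every uncovered hyperedge $e$ sets $\mathrm{deal}_i(e)=\mathrm{deal}_{i-1}(e)$ if it received some ''stuck'' message, and $\mathrm{deal}_i(e)=\alpha\cdot\mathrm{deal}_{i-1}(e)$ otherwise, and $\delta_i(e)=\delta_{i-1}(e)+\mathrm{deal}_i(e)$. A vertex terminates when it is in $C$ or all its hyperedges are covered; a hyperedge terminates when covered. The number of iterations is the number of iterations until all nodes have terminated. *)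

From mathcomp Require Import all_boot all_order all_algebra.
From mathcomp Require Import reals exp.
Set Implicit Arguments. Unset Strict Implicit. Unset Printing Implicit Defensive.
Import Order.TTheory GRing.Theory Num.Theory.
Local Open Scope ring_scope.

(* A hypergraph is given by finite types [V] (vertices) and [E] (hyperedge
   names) and an incidence map [inc : E -> {set V}]; [inc e] is the vertex set
   of hyperedge [e]. *)

Definition Eof (V E : finType) (inc : E -> {set V}) (v : V) : {set E} :=
  [set e | v \in inc e].

Definition maxdeg (V E : finType) (inc : E -> {set V}) : nat :=
  \max_(v : V) #|Eof inc v|.

Definition betaP (R : realFieldType) (f : nat) (eps : R) : R := eps / (f%:R + eps).

(* minimum of a finite sequence [x :: s] of reals; used only on nonempty
   sequences *)
Definition seqmin (R : realDomainType) (s : seq R) : R :=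
  foldr Num.min (head 0 s) s.

Record mwhvc_state (R : realFieldType) (V E : finType) := MkState {
  stC     : {set V};
  stCov   : {set E};          (* covered (hence terminated) hyperedges *)
  stEp    : V -> {set E};
  stTerm  : {set V};          (* vertices terminated WITHOUT joining C *)
  stDeal  : E -> R;
  stDelta : E -> R
}.

Section MWHVC.
Context (R : realFieldType) (V E : finType) (inc : E -> {set V})
        (w : V -> R) (f : nat) (eps alpha : R).

Let beta := betaP f eps.

Definition deal0 (e : E) : R :=
  beta * seqmin [seq w v / (#|Eof inc v|%:R) | v in inc e].

Definition mwhvc_init : mwhvc_state R V E :=
  {| stC := set0;
     stCov := set0;
     stEp := Eof inc;
     (* a vertex with no hyperedge has all its hyperedges covered *)
     stTerm := [set v | Eof inc v == set0];
     stDeal := deal0;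
     stDelta := deal0 |}.

Definition mwhvc_step (s : mwhvc_state R V E) : mwhvc_state R V E :=
  let active := fun v => (v \notin stC s) && (v \notin stTerm s) in
  let J := [set v | active v &&
              ((1 - beta) * w v <= \sum_(e in Eof inc v) stDelta s e)] in
  let N := [set e | (e \notin stCov s) && [exists v in J, e \in stEp s v]] in
  let Cov' := stCov s :|: N in
  let Ep' := fun v => if active v && (v \notin J) then stEp s v :\: N
                      else stEp s v in
  let Term' := stTerm s :|:
      [set v | active v && (v \notin J) && (Ep' v == set0)] in
  let C' := stC s :|: J in
  let active' := fun v => (v \notin C') && (v \notin Term') in
  let stuck := fun v => active' v &&
      ~~ (\sum_(e in Ep' v) stDeal s e <= (beta / alpha) * w v) in
  let deal' := fun e =>
      if e \in Cov' then stDeal s e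
      else if [exists v, stuck v && (e \in Ep' v)] then stDeal s e
      else alpha * stDeal s e in
  let delta' := fun e =>
      if e \in Cov' then stDelta s e else stDelta s e + deal' e in
  {| stC := C'; stCov := Cov'; stEp := Ep'; stTerm := Term';
     stDeal := deal'; stDelta := delta' |}.

(* State at the end of iteration i. *)
Definition mwhvc_run (i : nat) : mwhvc_state R V E := iter i mwhvc_step mwhvc_init.

Definition mwhvc_all_terminated (i : nat) : Prop :=
  (forall e : E, e \in stCov (mwhvc_run i)) /\
  (forall v : V, (v \in stC (mwhvc_run i)) \/
                 (forall e, e \in Eof inc v -> e \in stCov (mwhvc_run i))).

End MWHVC.

From mathcomp Require Import all_boot all_order all_algebra.
From mathcomp Require Import reals exp.
From mathcomp Require Import ring lra.
Set Implicit Arguments. Unset Strict Implicit. Unset Printing Implicit Defensive.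
Import Order.TTheory GRing.Theory Num.Theory.
Local Open Scope ring_scope.

(* In every iteration after which a hyperedge e is still uncovered, either e
   raises its deal or some vertex of e is stuck.  A raise is only allowed while
   deal(e) <= (beta/alpha) w(u) for the vertex u realising deal_0(e) =
   beta w(u) / |E(u)|, so e raises at most log_alpha Delta times.  A stuck
   vertex u stays out of C, i.e. its delta-sum stays below (1 - beta) w(u),
   while each stuck iteration adds at least (beta/alpha) w(u) to that sum, so u
   is stuck at most alpha/beta + 1 times.  Hence e is covered after
   log_alpha Delta + f (alpha/beta + 1) iterations. *)

Lemma foldr_min_mem (R : realDomainType) (x0 : R) (s : seq R) :
  foldr Num.min x0 s \in x0 :: s.
Proof.
elim: s => [|a s IH] /=; first by rewrite inE.
rewrite /Num.min /Order.min; case: ifP => _; first by rewrite !inE eqxx orbT.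
by move: IH; rewrite !inE => /orP [->|->]; rewrite ?orbT.
Qed.

Lemma seqmin_mem (R : realDomainType) (s : seq R) : s != [::] -> seqmin s \in s.
Proof.
case: s => [//|a s] _; rewrite /seqmin.
by have := foldr_min_mem a (a :: s); rewrite inE => /orP [/eqP->|//]; rewrite inE eqxx.
Qed.

Lemma betaP_gt0 (R : realFieldType) (f : nat) (eps : R) : 0 < eps -> 0 < betaP f eps.
Proof. by move=> eps_gt0; rewrite divr_gt0 // ltr_wpDl. Qed.

Lemma betaP_le1 (R : realFieldType) (f : nat) (eps : R) : 0 < eps -> betaP f eps <= 1.
Proof. by move=> eps_gt0; rewrite ler_pdivrMr ?mul1r ?lerDr // ltr_wpDl. Qed.

Lemma natr_le_ln_div (R : realType) (a x : R) (k : nat) :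
  1 < a -> a ^+ k <= x -> k%:R <= ln x / ln a.
Proof.
move=> a_gt1 akx; have a_gt0 : 0 < a := lt_trans ltr01 a_gt1.
have ak_gt0 : 0 < a ^+ k := exprn_gt0 _ a_gt0.
rewrite ler_pdivlMr ?ln_gt0 // mulr_natl -lnXn //.
by rewrite ler_ln ?posrE // (lt_le_trans ak_gt0).
Qed.

Lemma card_Eof_le_maxdeg (V E : finType) (inc : E -> {set V}) (v : V) :
  (#|Eof inc v| <= maxdeg inc)%N.
Proof. exact: (@leq_bigmax _ (fun v => #|Eof inc v|) v). Qed.

Lemma maxdeg_le_card (V E : finType) (inc : E -> {set V}) : (maxdeg inc <= #|E|)%N.
Proof. by apply/bigmax_leqP => v _; apply: max_card. Qed.

Section Dynamics.
Variables (R : realFieldType) (V E : finType) (inc : E -> {set V}) (w : V -> R)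
  (f : nat) (eps alpha : R).
Hypothesis w_ge0 : forall v, 0 <= w v.
Hypothesis eps_gt0 : 0 < eps.
Hypothesis alpha_gt1 : 1 < alpha.
Hypothesis inc_neq0 : forall e, inc e != set0.

Local Notation beta := (betaP f eps).
Local Notation state := (mwhvc_state R V E).
Local Notation step := (mwhvc_step inc w f eps alpha).
Local Notation run := (mwhvc_run inc w f eps alpha).

Definition active (s : state) v := (v \notin stC s) && (v \notin stTerm s).

Definition joining (s : state) := [set v | active s v &&
  ((1 - beta) * w v <= \sum_(e in Eof inc v) stDelta s e)].

Definition newly_covered (s : state) :=
  [set e | (e \notin stCov s) && [exists v in joining s, e \in stEp s v]].

Definition stuck (s : state) v := active (step s) v &&
  ~~ (\sum_(e in stEp (step s) v) stDeal s e <= (beta / alpha) * w v).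

Definition raises (s : state) e := (e \notin stCov (step s)) &&
  ~~ [exists v, stuck s v && (e \in stEp (step s) v)].

Lemma mwhvc_run_S n : run n.+1 = step (run n).
Proof. by []. Qed.

Lemma stC_step s : stC (step s) = stC s :|: joining s.
Proof. by []. Qed.

Lemma stCov_step s : stCov (step s) = stCov s :|: newly_covered s.
Proof. by []. Qed.

Lemma stEp_step s v : stEp (step s) v =
  if active s v && (v \notin joining s) then stEp s v :\: newly_covered s
  else stEp s v.
Proof. by []. Qed.

Lemma stTerm_step s : stTerm (step s) = stTerm s :|:
  [set v | active s v && (v \notin joining s) && (stEp (step s) v == set0)].
Proof. by []. Qed.

Lemma stDeal_step s e :
  stDeal (step s) e = if raises s e then alpha * stDeal s e else stDeal s e.
Proof. by rewrite /raises /=; case: (e \in _) => //=; case: ifP. Qed.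

Lemma stDelta_step s e : stDelta (step s) e =
  if e \in stCov (step s) then stDelta s e else stDelta s e + stDeal (step s) e.
Proof. by []. Qed.

Lemma alpha_gt0 : 0 < alpha.
Proof. exact: lt_trans ltr01 alpha_gt1. Qed.

Lemma beta_gt0 : 0 < beta.
Proof. exact: betaP_gt0. Qed.

Lemma deal0_witness e : exists2 u, u \in inc e &
  deal0 inc w f eps e = beta * (w u / #|Eof inc u|%:R).
Proof.
rewrite /deal0; set s := [seq _ | v in inc e].
have /seqmin_mem /imageP [u u_e ->] : s != [::].
  have [u u_e] := set0Pn _ (inc_neq0 e).
  apply/eqP => s0; have : w u / #|Eof inc u|%:R \in s by apply/imageP; exists u.
  by rewrite s0.
by exists u.
Qed.

Lemma deal0_ge0 e : 0 <= deal0 inc w f eps e.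
Proof.
have [u _ ->] := deal0_witness e.
by apply: mulr_ge0; [exact: ltW beta_gt0 | exact: divr_ge0].
Qed.

Definition mwhvc_inv (s : state) :=
  [/\ forall e, 0 <= stDeal s e, forall e, 0 <= stDelta s e,
      forall v, active s v -> stEp s v = Eof inc v :\: stCov s &
      forall e, e \notin stCov s -> forall u, u \in inc e -> active s u].

Lemma mwhvc_inv_init : mwhvc_inv (mwhvc_init inc w f eps).
Proof.
split=> //= [e|e|v _|e _ u u_e]; rewrite ?deal0_ge0 ?setD0 //.
by rewrite /active /= in_set0 in_set; apply/set0Pn; exists e; rewrite in_set.
Qed.

Lemma stEp_step_active s v : mwhvc_inv s -> active (step s) v ->
  stEp (step s) v = Eof inc v :\: stCov (step s).
Proof.
case=> _ _ Ep_act _; rewrite /active stC_step stTerm_step !in_setU !negb_or.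
move=> /andP [/andP [vC vJ] /andP [vT _]].
have v_act : active s v by rewrite /active vC vT.
by rewrite stEp_step v_act vJ /= Ep_act // setDDl.
Qed.

Lemma active_step_uncovered s e u : mwhvc_inv s ->
  e \notin stCov (step s) -> u \in inc e -> active (step s) u.
Proof.
case=> _ _ Ep_act unc_act; rewrite stCov_step in_setU negb_or => /andP [eC eN] u_e.
have u_act := unc_act e eC u u_e.
have e_Ep : e \in stEp s u by rewrite Ep_act // in_setD eC in_set.
have uJ : u \notin joining s.
  apply: contra eN => uJ; rewrite in_set eC /=.
  by apply/existsP; exists u; rewrite uJ e_Ep.
have Ep'_neq0 : stEp (step s) u != set0.
  by apply/set0Pn; exists e; rewrite stEp_step u_act uJ in_setD eN.
move: u_act; rewrite /active stC_step stTerm_step !in_setU !negb_or in_set.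
by rewrite (negbTE Ep'_neq0) uJ !andbT andbF => /andP [-> ->].
Qed.

Lemma mwhvc_inv_step s : mwhvc_inv s -> mwhvc_inv (step s).
Proof.
move=> inv_s; case: (inv_s) => deal_ge0 delta_ge0 _ _.
have deal'_ge0 e : 0 <= stDeal (step s) e.
  by rewrite stDeal_step; case: ifP; rewrite ?mulr_ge0 ?(ltW alpha_gt0).
split=> // [e|v|e].
- by rewrite stDelta_step; case: ifP; rewrite ?addr_ge0.
- exact: stEp_step_active inv_s.
- by move=> e_unc u; apply: active_step_uncovered.
Qed.

Lemma mwhvc_inv_run i : mwhvc_inv (run i).
Proof. by elim: i => [|i IH]; [apply: mwhvc_inv_init | apply: mwhvc_inv_step]. Qed.

Lemma stDelta_step_ge s e : mwhvc_inv s -> stDelta s e <= stDelta (step s) e.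
Proof.
move/mwhvc_inv_step => [deal'_ge0 _ _ _].
by rewrite stDelta_step; case: ifP; rewrite ?lerDl.
Qed.

Lemma stuck_active s u : stuck s u -> active s u && (u \notin joining s).
Proof.
rewrite /stuck /active stC_step stTerm_step !in_setU !negb_or.
by move=> /andP [/andP [/andP [-> ->] /andP [-> _]] _].
Qed.

Lemma stuck_sum_lt s u : stuck s u ->
  \sum_(e in Eof inc u) stDelta s e < (1 - beta) * w u.
Proof. by move/stuck_active => /andP [u_act]; rewrite in_set u_act ltNge. Qed.

Lemma stuck_sum_increase s u : mwhvc_inv s -> stuck s u ->
  \sum_(e in Eof inc u) stDelta s e + (beta / alpha) * w u <
  \sum_(e in Eof inc u) stDelta (step s) e.
Proof.
move=> inv_s u_stuck; case/andP: (u_stuck) => u_act; rewrite -ltNge.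
have Ep_u := stEp_step_active inv_s u_act.
set A := stEp (step s) u in Ep_u *.
have delta_ge e : e \in Eof inc u ->
    stDelta s e + (if e \in A then stDeal s e else 0) <= stDelta (step s) e.
  move=> _; case: ifP => e_A; last by rewrite addr0 stDelta_step_ge.
  have e_unc : e \notin stCov (step s) by move: e_A; rewrite Ep_u in_setD => /andP [].
  have e_stuck : [exists v, stuck s v && (e \in stEp (step s) v)].
    by apply/existsP; exists u; rewrite u_stuck e_A.
  by rewrite stDelta_step (negbTE e_unc) stDeal_step /raises e_unc e_stuck.
have sum_A : \sum_(e in Eof inc u) (if e \in A then stDeal s e else 0) =
    \sum_(e in A) stDeal s e.
  rewrite -big_mkcondr; apply: eq_bigl => e.
  case: (boolP (e \in A)) => e_A; rewrite ?andbF // andbT.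
  by move: e_A; rewrite Ep_u in_setD => /andP [].
move=> lt_sum; apply: lt_le_trans (ler_sum _ delta_ge).
by rewrite big_split /= sum_A ltrD2l.
Qed.

Definition stuck_count n u : nat := (\sum_(i < n) stuck (run i) u)%N.

Definition raise_count n e : nat := (\sum_(i < n) raises (run i) e)%N.

Lemma stuck_count_sum_ge n u :
  (stuck_count n u)%:R * (beta / alpha * w u) <=
  \sum_(e in Eof inc u) stDelta (run n) e.
Proof.
elim: n => [|n IH].
  by rewrite /stuck_count big_ord0 mul0r sumr_ge0 // => e _; case: (mwhvc_inv_run 0).
rewrite /stuck_count big_ord_recr /= natrD mulrDl.
case: (boolP (stuck (run n) u)) => [u_stuck|_].
  by have := stuck_sum_increase (mwhvc_inv_run n) u_stuck; rewrite mul1r; lra.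
rewrite mul0r addr0; apply: le_trans IH _.
by apply: ler_sum => e _; apply: stDelta_step_ge; apply: mwhvc_inv_run.
Qed.

Lemma stuck_count_le n u : (stuck_count n u)%:R <= alpha / beta + 1.
Proof.
have b_gt0 := beta_gt0; have a_gt0 := alpha_gt0.
elim: n => [|n IH].
  by rewrite /stuck_count big_ord0 addr_ge0 // ltW // divr_gt0.
rewrite /stuck_count big_ord_recr /= natrD -/(stuck_count n u).
case: (boolP (stuck (run n) u)) => [u_stuck|_]; last by rewrite addr0.
have lt_w := stuck_sum_lt u_stuck; have ge_cnt := stuck_count_sum_ge n u.
have w_gt0 : 0 < w u.
  rewrite lt_def w_ge0 andbT; apply/eqP => w0.
  by move: lt_w ge_cnt; rewrite w0 !mulr0; lra.
have : (stuck_count n u)%:R * (beta / alpha) * w u < 1 * w u.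
  rewrite -mulrA; apply: le_lt_trans ge_cnt (lt_le_trans lt_w _).
  by rewrite ler_pM2r // lerBlDr lerDl ltW.
rewrite ltr_pM2r // mulrA ltr_pdivrMr // mul1r -ltr_pdivlMr // => lt_cnt.
by rewrite lerD2r ltW.
Qed.

Lemma stDeal_run n e :
  stDeal (run n) e = alpha ^+ raise_count n e * deal0 inc w f eps e.
Proof.
elim: n => [|n IH]; first by rewrite /raise_count big_ord0 mul1r.
rewrite mwhvc_run_S stDeal_step /raise_count big_ord_recr /= -/(raise_count n e) IH.
by case: ifP => _; rewrite ?addn0 // addn1 exprS mulrA.
Qed.

Lemma raises_deal_le s e u : mwhvc_inv s -> raises s e -> u \in inc e ->
  stDeal s e <= beta / alpha * w u.
Proof.
move=> inv_s /andP [e_unc not_stuck] u_e; case: (inv_s) => deal_ge0 _ _ _.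
have u_act := active_step_uncovered inv_s e_unc u_e.
have e_Ep : e \in stEp (step s) u.
  by rewrite stEp_step_active // in_setD e_unc in_set.
have : ~~ stuck s u.
  apply: contra not_stuck => u_stuck.
  by apply/existsP; exists u; rewrite u_stuck e_Ep.
rewrite /stuck u_act negbK; apply: le_trans.
by rewrite (bigD1 e e_Ep) /= lerDl sumr_ge0.
Qed.

Lemma raises_weight_gt0 s e u : mwhvc_inv s -> raises s e -> u \in inc e -> 0 < w u.
Proof.
move=> inv_s /andP [e_unc _] u_e; case: (inv_s) => _ delta_ge0 Ep_act unc_act.
have e_unc0 : e \notin stCov s.
  by apply: contra e_unc; rewrite stCov_step in_setU => ->.
have u_act := unc_act e e_unc0 u u_e.
rewrite lt_def w_ge0 andbT; apply: contra e_unc => /eqP w0.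
have u_J : u \in joining s by rewrite in_set u_act w0 mulr0 sumr_ge0.
rewrite stCov_step in_setU in_set e_unc0 /=; apply/orP; right.
by apply/existsP; exists u; rewrite u_J Ep_act // in_setD e_unc0 in_set.
Qed.

Lemma raises_exprn_le n e : raises (run n) e ->
  alpha ^+ (raise_count n e).+1 <= (maxdeg inc)%:R.
Proof.
move=> e_raises; have inv_n := mwhvc_inv_run n.
have [u u_e deal0_u] := deal0_witness e.
have deal_le := raises_deal_le inv_n e_raises u_e.
have w_gt0 := raises_weight_gt0 inv_n e_raises u_e.
rewrite stDeal_run deal0_u in deal_le.
have d_gt0 : 0 < #|Eof inc u|%:R :> R.
  by rewrite ltr0n card_gt0; apply/set0Pn; exists e; rewrite in_set.
apply: le_trans (_ : #|Eof inc u|%:R <= _); last by rewrite ler_nat card_Eof_le_maxdeg.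
have K_gt0 : 0 < beta * w u by rewrite mulr_gt0 // beta_gt0.
set k := raise_count n e in deal_le *; set d := #|Eof inc u|%:R in deal_le d_gt0 *.
have : alpha ^+ k / d * (beta * w u) <= alpha^-1 * (beta * w u).
  by move: deal_le; congr (_ <= _); ring.
by rewrite ler_pM2r // ler_pdivrMr // mulrC ler_pdivlMr ?alpha_gt0 // -exprSr.
Qed.

Lemma exprn_raise_count_le n e : alpha ^+ raise_count n e <= (maxdeg inc)%:R.
Proof.
elim: n => [|n IH].
  have [u u_e] := set0Pn _ (inc_neq0 e).
  rewrite /raise_count big_ord0 expr0 ler1n (leq_trans _ (card_Eof_le_maxdeg _ u)) //.
  by rewrite card_gt0; apply/set0Pn; exists e; rewrite in_set.
rewrite /raise_count big_ord_recr /= -/(raise_count n e).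
by case: (boolP (raises _ e)) => [/raises_exprn_le|_]; rewrite ?addn1 ?addn0.
Qed.

Lemma raises_or_stuck s e : mwhvc_inv s -> e \notin stCov (step s) ->
  raises s e || [exists u in inc e, stuck s u].
Proof.
move=> inv_s e_unc; rewrite /raises e_unc andTb.
case: (boolP [exists v, _]) => // /existsP [v /andP [v_stuck e_Ep]].
apply/existsP; exists v; rewrite v_stuck andbT.
case/andP: v_stuck => v_act _; move: e_Ep.
by rewrite stEp_step_active // in_setD => /andP [_]; rewrite in_set.
Qed.

Lemma uncovered_le_counts T e : e \notin stCov (run T) ->
  (T <= raise_count T e + \sum_(u in inc e) stuck_count T u)%N.
Proof.
move=> e_unc.
have cov_mono i : (i <= T)%N -> stCov (run i) \subset stCov (run T).
  move/subnK => <-; elim: (T - i)%N => [|k IH] //.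
  by rewrite addSn mwhvc_run_S stCov_step (subset_trans IH) ?subsetUl.
have one_le (i : 'I_T) :
    (1 <= raises (run i) e + \sum_(u in inc e) stuck (run i) u)%N.
  have e_unc' : e \notin stCov (step (run i)).
    by apply: contra e_unc; apply: subsetP; apply: cov_mono (ltn_ord i).
  case/orP: (raises_or_stuck (mwhvc_inv_run i) e_unc') => [-> //|].
  case/existsP => u /andP [u_e u_stuck].
  by rewrite (leq_trans _ (leq_addl _ _)) // (bigD1 u u_e) /= u_stuck.
rewrite /raise_count /stuck_count exchange_big -big_split /=.
by rewrite -{1}[T]card_ord -sum1_card leq_sum.
Qed.

End Dynamics.

Lemma mwhvc_terminated_after (R : realType) (V E : finType) (inc : E -> {set V})
    (w : V -> R) (f : nat) (eps alpha : R) (T : nat) :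
  (forall e, inc e != set0) -> (forall e, #|inc e| <= f)%N ->
  (forall v, 0 <= w v) -> 0 < eps -> 1 < alpha ->
  ln (maxdeg inc)%:R / ln alpha + f%:R * (alpha / betaP f eps + 1) < T%:R ->
  mwhvc_all_terminated inc w f eps alpha T.
Proof.
move=> inc_neq0 inc_le w_ge0 eps_gt0 alpha_gt1 T_gt.
suff cov e : e \in stCov (mwhvc_run inc w f eps alpha T) by split=> [//|v]; right.
apply/negPn/negP => /(uncovered_le_counts (f:=f) w_ge0 eps_gt0 alpha_gt1 inc_neq0).
rewrite -(ler_nat R) natrD natr_sum => T_le.
have raise_le := natr_le_ln_div alpha_gt1
  (exprn_raise_count_le f w_ge0 eps_gt0 alpha_gt1 inc_neq0 T e).
have stuck_le : \sum_(u in inc e) (stuck_count inc w f eps alpha T u)%:R <=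
    f%:R * (alpha / betaP f eps + 1).
  apply: le_trans (_ : \sum_(u in inc e) (alpha / betaP f eps + 1) <= _).
    by apply: ler_sum => u _; apply: stuck_count_le.
  rewrite sumr_const -[X in X <= _]mulr_natl ler_wpM2r ?ler_nat //.
  by rewrite addr_ge0 // ltW // divr_gt0 ?betaP_gt0 // (lt_trans ltr01).
lra.
Qed.

Theorem mainTheorem6 (R : realType) :
  exists c : R, 0 < c /\
  forall (V E : finType) (inc : E -> {set V}) (w : V -> R) (f : nat)
         (eps alpha : R),
    injective inc ->
    (forall e, inc e != set0) ->
    (forall e, #|inc e| <= f)%N ->
    (forall v, 0 <= w v) ->
    (3 <= maxdeg inc)%N ->
    0 < eps -> eps <= 1 ->
    1 < alpha ->
    exists i : nat,
      mwhvc_all_terminated inc w f eps alpha i /\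
      i%:R <= c * (ln ((maxdeg inc)%:R) / ln alpha
                   + f%:R * alpha / betaP f eps).
Proof.
exists 4; split=> // V E inc w f eps alpha _ inc_neq0 inc_le w_ge0 maxdeg_ge3
  eps_gt0 _ alpha_gt1.
have beta_gt0 : 0 < betaP f eps := betaP_gt0 f eps_gt0.
have [e0 _] : exists e0, e0 \in E.
  apply/card_gt0P; rewrite (leq_trans _ (maxdeg_le_card inc)) //.
  exact: leq_trans maxdeg_ge3.
have f_ge1 : 1 <= f%:R :> R by rewrite ler1n (leq_trans _ (inc_le e0)) // card_gt0.
set L := ln (maxdeg inc)%:R / ln alpha.
have L_ge0 : 0 <= L.
  by rewrite divr_ge0 ?ln_ge0 ?ler1n ?(ltW alpha_gt1) // (leq_trans _ maxdeg_ge3).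
set G := f%:R * (alpha / betaP f eps).
have f_le_G : f%:R <= G.
  rewrite /G ler_peMr ?ler0n // ler_pdivlMr // mul1r.
  by rewrite (le_trans (betaP_le1 f eps_gt0)) // ltW.
set X := L + f%:R * (alpha / betaP f eps + 1).
have X_ge0 : 0 <= X by rewrite /X mulrDr mulr1 -/G; lra.
exists (Num.truncn X).+1; split.
  by apply: mwhvc_terminated_after => //; apply: truncnS_gt.
have := truncn_le X; rewrite X_ge0 -mulrA -/G /X mulrDr mulr1 -/G => trunc_le.
rewrite -addn1 natrD; lra.
Qed.
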